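(* Let $q$ be a prime power, $s\geq1$, $m\geq1$, $n=q^{s-1}$, and let $G$ be the $s\times n$ matrix over $\mathbb{F}_q$ whose first row is all ones and whose columns, restricted to the last $s-1$ rows, run through all vectors of $\mathbb{F}_q^{s-1}$. Let $P_i\in\mathrm{PG}(s-1,q)$ be the projective point of the $i$-th column of $G$; these are exactly the points of $\mathrm{PG}(s-1,q)$ outside the hyperplane $H: X_1=0$, and we identify $\mathrm{PG}(s-1,q)\setminus H$ with the affine space $\mathrm{AG}(s-1,q)$. Let $\mathcal{RM}_q(1,s-1)$ be the code over $\mathbb{F}_q$ generated by $G$. If $\mathbf{c}$ is a word of the extension code $\mathcal{RM}_q(1,s-1)\otimes\mathbb{F}_{q^m}$ of Hamming weight $q^{s-1}-q^{s-1-m}$, then the set $\{P_i: i\in\{1,\dots,n\}\setminus\mathrm{supp}(\mathbf{c})\}$ is exactly the set of all points of some affine subspace of $\mathrm{AG}(s-1,q)$ of codimension $m$.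
   Context: The extension code $C\otimes\mathbb{F}_{q^m}$ of a linear code $C\subseteq\mathbb{F}_q^n$ is the $\mathbb{F}_{q^m}$-linear span of $C$ in $\mathbb{F}_{q^m}^n$. The support $\mathrm{supp}(\mathbf{c})$ of a word is the set of its nonzero coordinates. Under the identification, the affine subspaces of $\mathrm{AG}(s-1,q)$ of codimension $m$ are the sets $\Pi\setminus H$ for projective subspaces $\Pi$ of codimension $m$ not contained in $H$. *)

From HB Require Import structures.
From mathcomp Require Import all_boot all_order all_algebra all_field.
Set Implicit Arguments. Unset Strict Implicit. Unset Printing Implicit Defensive.
Import GRing.Theory.
Local Open Scope ring_scope.

(* Columns of the generator matrix G of RM_q(1, s-1) are indexed by the
   vectors v of F^(k) (k = s-1); the column is (1, v), written as a row
   vector of F^(1+k).  It is also a representative of the point P_v. *)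
Definition RMcol (F : fieldType) (k : nat) (v : 'rV[F]_k) : 'rV[F]_(1 + k) :=
  row_mx (1 : 'rV[F]_1) v.

(* The codeword of the extension code RM_q(1,s-1) (x) L with coefficient
   vector a (an L-linear combination of the rows of G), evaluated at the
   column indexed by v. *)
Definition extWord (F : fieldType) (L : fieldExtType F) (k : nat)
    (a : 'rV[L]_(1 + k)) (v : 'rV[F]_k) : L :=
  \sum_(j < 1 + k) a ord0 j * ((RMcol v) ord0 j)%:A.

Definition extSupp (F : finFieldType) (L : fieldExtType F) (k : nat)
    (a : 'rV[L]_(1 + k)) : {set 'rV[F]_k} :=
  [set v | extWord a v != 0].

Definition firstCoord (F : fieldType) (k : nat) (u : 'rV[F]_(1 + k)) : F :=
  u ord0 (lshift k ord0).

(* Writing the coefficients of [a] in an F-basis of L turns the word into the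
   F-affine map v |-> (1, v) *m A with A : 'M[F]_(1 + k, m), and its zero set
   is a coset of the kernel of the linear part, hence has q^(k - r) elements
   where r is the rank of the linear part.  The weight hypothesis says that
   there are exactly q^(k - m) zeros, so r = m = \rank A, and the zeros are
   exactly the points (1, v) of the projective subspace [kermx A], of
   codimension m and not contained in X_1 = 0. *)

From HB Require Import structures.
From mathcomp Require Import all_boot all_order all_algebra all_field.
From mathcomp Require Import zify.
Import GRing.Theory Num.Theory passmx.
Local Open Scope ring_scope.

Lemma card_ker_rows (F : finFieldType) k n (B : 'M[F]_(k, n)) :
  #|[set w : 'rV[F]_k | w *m B == 0]| = (#|F| ^ (k - \rank B))%N.
Proof.
set K := kermx B; set C := row_base K.
have -> : [set w : 'rV[F]_k | w *m B == 0] = [set x *m C | x : 'rV[F]_(\rank K)].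
  apply/setP => w; rewrite inE -sub_kermx -/K -(eq_row_base K) -/C.
  apply/idP/imsetP => [/submxP [x ->]|[x _ ->]]; first by exists x.
  exact: submxMl.
rewrite card_imset; last exact: row_free_inj (row_base_free K).
by rewrite card_mx mul1n /K mxrank_ker.
Qed.

Lemma RMcol_mul (F : fieldType) k n (v : 'rV[F]_k) (A : 'M[F]_(1 + k, n)) :
  RMcol v *m A = usubmx A + v *m dsubmx A.
Proof. by rewrite /RMcol -{1}(vsubmxK A) mul_row_col mul1mx. Qed.

Lemma rank_dsubmx_le {F : fieldType} {k l n} (A : 'M[F]_(k + l, n)) :
  (\rank (dsubmx A) <= \rank A)%N.
Proof.
apply: mxrankS; have : (col_mx (usubmx A) (dsubmx A) <= A)%MS.
  by rewrite vsubmxK submx_refl.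
by rewrite col_mx_sub => /andP [].
Qed.

Section AffineZeros.

Context {F : finFieldType} {k n : nat}.
Variable A : 'M[F]_(1 + k, n).

Definition RMcol_zeros : {set 'rV[F]_k} := [set v | RMcol v *m A == 0].

Lemma card_RMcol_zeros v0 : RMcol v0 *m A = 0 ->
  #|RMcol_zeros| = (#|F| ^ (k - \rank (dsubmx A)))%N.
Proof.
rewrite RMcol_mul => A_v0.
have -> : RMcol_zeros = [set w + v0 | w in [set w | w *m dsubmx A == 0]].
  apply/setP => v; rewrite inE RMcol_mul -{1}A_v0 -subr_eq0 opprD addrACA subrr.
  rewrite add0r -mulmxBl; apply/idP/imsetP => [kerv|[w + ->]].
    by exists (v - v0); rewrite ?inE ?subrK.
  by rewrite inE addrK.
by rewrite card_imset ?card_ker_rows //; exact: addIr.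
Qed.

(* The count of zeros forces the linear part alone to have full column rank. *)
Lemma rank_from_card_RMcol_zeros v0 : RMcol v0 *m A = 0 -> (n <= k)%N ->
  #|RMcol_zeros| = (#|F| ^ (k - n))%N -> \rank A = n.
Proof.
move=> /card_RMcol_zeros -> le_nk /(expnI (finNzRing_gt1 F)) eq_rank.
have rank_dA : \rank (dsubmx A) = n by have := rank_leq_col (dsubmx A); lia.
by apply/eqP; rewrite eqn_leq rank_leq_col -{1}rank_dA rank_dsubmx_le.
Qed.

End AffineZeros.

Lemma card_compl_from_weight (q k m z w : nat) : (1 < q)%N -> (z + w = q ^ k)%N ->
  (w%:R : rat) = q%:R ^+ k - q%:R ^ (k%:Z - m%:Z) ->
  (m <= k)%N /\ z = (q ^ (k - m))%N.
Proof.
move=> q_gt1 zw_k hw.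
have q_neq0 : (q%:R : rat) != 0 by rewrite pnatr_eq0 -lt0n (ltnW q_gt1).
have z_eq : (z%:R : rat) = q%:R ^ (k%:Z - m%:Z).
  by rewrite -[z%:R]addr0 -(subrr (w%:R : rat)) addrA -natrD zw_k natrX hw opprB subrKC.
have le_mk : (m <= k)%N.
  rewrite leqNgt; apply/negP => lt_km.
  move: z_eq; rewrite -opprB (subzn (ltnW lt_km)) -invr_expz => z_eq.
  have /eqP : ((z * q ^ (m - k))%N%:R : rat) = 1.
    by rewrite natrM natrX z_eq mulVf // expf_neq0.
  rewrite pnatr_eq1 muln_eq1 -(expn0 q) => /andP [_ /eqP/(expnI q_gt1)]; lia.
split=> //; apply/eqP; rewrite -(eqr_nat rat) natrX z_eq subzn //.
Qed.

Section CoordinateMatrix.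

Context {F : fieldType} {L : fieldExtType F}.

Definition coord_mx {k} (a : 'rV[L]_k) : 'M[F]_(k, \dim {:L}) :=
  \matrix_j rVof (vbasis {:L}) (a 0 j).

Lemma extWord_eq0 k (a : 'rV[L]_(1 + k)) v :
  (extWord a v == 0) = (RMcol v *m coord_mx a == 0).
Proof.
have -> : RMcol v *m coord_mx a = rVof (vbasis {:L}) (extWord a v).
  rewrite mulmx_sum_row /extWord linear_sum; apply: eq_bigr => j _.
  by rewrite rowK mulr_algr linearZ.
by rewrite rVof_eq0 // vbasisP.
Qed.

End CoordinateMatrix.

Theorem mainTheorem7 (F : finFieldType) (L : fieldExtType F) (s m : nat)
  (hs : (1 <= s)%N) (hm : (1 <= m)%N) (hL : \dim {:L} = m)
  (a : 'rV[L]_(1 + s.-1)) :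
  (#|extSupp a|%:R : rat) =
     (#|F|%:R : rat) ^+ s.-1 - (#|F|%:R : rat) ^ ((s.-1)%:Z - m%:Z) ->
  exists U : 'M[F]_(1 + s.-1),
    [/\ \rank U = ((1 + s.-1) - m)%N,
        (exists2 u : 'rV[F]_(1 + s.-1), (u <= U)%MS & firstCoord u != 0)
      & forall v : 'rV[F]_(s.-1), (v \notin extSupp a) <-> (RMcol v <= U)%MS].
Proof.
move: a; set k := s.-1 => a hw; set A := coord_mx a.
have zerosE : ~: extSupp a = RMcol_zeros A.
  by apply/setP => v; rewrite in_setC !inE negbK extWord_eq0.
have [le_mk card_zeros] : (m <= k)%N /\ #|RMcol_zeros A| = (#|F| ^ (k - m))%N.
  apply: card_compl_from_weight hw; first exact: finNzRing_gt1.
  by rewrite -zerosE addnC cardsC card_mx mul1n.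
have [v0] : exists v0, v0 \in RMcol_zeros A.
  by apply/card_gt0P; rewrite card_zeros expn_gt0 (ltnW (finNzRing_gt1 F)).
rewrite inE => /eqP A_v0.
have rankA : \rank A = m.
  rewrite -hL; apply: rank_from_card_RMcol_zeros A_v0 _ _.
  - by rewrite hL.
  - by rewrite card_zeros hL.
exists (kermx A); split.
- by rewrite mxrank_ker rankA.
- exists (RMcol v0); first by rewrite sub_kermx A_v0.
  by rewrite /firstCoord /RMcol row_mxEl mxE oner_neq0.
- by move=> v; rewrite sub_kermx -extWord_eq0 inE negbK.
Qed.
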